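(* Let $q$ be a prime power with $n\mid q-1$, let $\zeta_n\in\mathbb{F}_q$ be a primitive $n$-th root of unity and $g\ge1$. Then the number of $\operatorname{PGl}_n(\mathbb{F}_q)$-conjugacy classes (under simultaneous conjugation) of tuples $(A_1,B_1,\dots,A_g,B_g)\in\operatorname{Sl}_n(\mathbb{F}_q)^{2g}$ with $[A_1,B_1]\cdots[A_g,B_g]=\zeta_nI$ equals the number of such tuples divided by $|\operatorname{PGl}_n(\mathbb{F}_q)|$.
   Context: $[A,B]=ABA^{-1}B^{-1}$. The set of these conjugacy classes is what the paper calls the set of $\mathbb{F}_q$-points of the twisted character variety $\mathcal{M}^g(\operatorname{Sl}_n)(q)$. *)

From HB Require Import structures.
From mathcomp Require Import all_boot all_order all_algebra all_fingroup.
Set Implicit Arguments. Unset Strict Implicit. Unset Printing Implicit Defensive.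
Import GRing.Theory.
Local Open Scope ring_scope.

(* Matrices of size m.+1 (the paper's n is m.+1). *)
Section Defs.
Variables (F : finFieldType) (m g : nat).

Notation Mat := 'M[F]_m.+1.

Definition tuple_t := {ffun 'I_g -> Mat * Mat}.

Definition mxcomm (A B : Mat) : Mat := A *m B *m invmx A *m invmx B.

Definition prod_comm (t : tuple_t) : Mat :=
  \big[mulmx/1%:M]_(i < g) mxcomm (t i).1 (t i).2.

Definition twisted_tuples (z : F) : {set tuple_t} :=
  [set t : tuple_t | [forall i, (\det (t i).1 == 1) && (\det (t i).2 == 1)]
                     && (prod_comm t == z%:M)].

Definition conj_tuple (P : Mat) (t : tuple_t) : tuple_t :=
  [ffun i => (P *m (t i).1 *m invmx P, P *m (t i).2 *m invmx P)].

Definition GL_scalars : {set {'GL_m.+1[F]}} :=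
  [set x : {'GL_m.+1[F]} | is_scalar_mx (GLval x)].

Definition PGL := ('GL_m.+1[F] / GL_scalars)%g.

(* orbits of the simultaneous conjugation action (scalars act trivially,
   so these are exactly the PGl_n(F)-orbits) *)
Definition conj_orbit (t : tuple_t) : {set tuple_t} :=
  [set conj_tuple (GLval P) t | P : {'GL_m.+1[F]}].

Definition conj_classes (z : F) : {set {set tuple_t}} :=
  [set conj_orbit t | t in twisted_tuples z].

End Defs.

(* Simultaneous conjugation makes Gl_n(F_q) act on the twisted tuples, and
   the scalars act trivially; it suffices to show that they are exactly the
   stabiliser of every tuple, since then every orbit has |PGl_n(F_q)|
   elements.  Let P commute with all A_i, B_i.  The centraliser of P acts on
   F_q^n, and on any nonzero invariant subspace of dimension k the product of
   commutators still acts as zeta, so zeta^k = det 1 = 1 and k = n: the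
   representation is irreducible.  The same holds after extending scalars by
   the field F_q[P], so by Schur's lemma P cannot have a non-linear minimal
   polynomial, i.e. P is scalar. *)

From HB Require Import structures.
From mathcomp Require Import all_boot all_order all_algebra all_fingroup.
From mathcomp Require Import mxrepresentation.
Import MatrixGenField.
Set Implicit Arguments. Unset Strict Implicit. Unset Printing Implicit Defensive.
Import GRing.Theory.
Local Open Scope ring_scope.

(* a b a^-1 b^-1 as in [mxcomm]; fingroup's [~ a, b] is a^-1 b^-1 a b. *)
Definition prod_commg (gT : finGroupType) g (a b : 'I_g -> gT) : gT :=
  (\prod_(i < g) (a i * b i * (a i)^-1 * (b i)^-1))%g.

Lemma prim_root_expr_eq1_leq (R : idomainType) n (z : R) k :
  n.-primitive_root z -> (0 < k)%N -> z ^+ k = 1 -> (n <= k)%N.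
Proof.
by move=> zP k_gt0 zk1; apply: dvdn_leq k_gt0 _; rewrite (prim_order_dvd zP) zk1.
Qed.

Lemma submod_mx_scalar (K : fieldType) (gT : finGroupType) (G : {group gT}) d
    (rG : mx_representation K G d) U (Umod : mxmodule rG U) x z :
  rG x = z%:M -> submod_mx Umod x = z%:M.
Proof.
by move=> rxz; rewrite /submod_mx rxz mul_mx_scalar linearZ /= val_submodK scalemx1.
Qed.

Section CommutatorRepr.
Variables (gT : finGroupType) (G : {group gT}) (g : nat) (a b : 'I_g -> gT).
Hypotheses (aG : forall i, a i \in G) (bG : forall i, b i \in G).

Lemma det_repr_prod_commg (K : fieldType) d (rG : mx_representation K G d) :
  \det (rG (prod_commg a b)) = 1.
Proof.
pose P x := (x \in G) && (\det (rG x) == 1).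
suff /andP[_ /eqP //] : P (prod_commg a b).
apply: (big_ind P) => [|x y /andP[Gx /eqP dx] /andP[Gy /eqP dy] | i _].
- by rewrite /P group1 repr_mx1 det1 eqxx.
- by rewrite /P groupM // repr_mxM // det_mulmx dx dy mulr1 eqxx.
have [Ga Gb] := (aG i, bG i).
have ua : \det (rG (a i)) \is a GRing.unit by rewrite -unitmxE repr_mx_unit.
have ub : \det (rG (b i)) \is a GRing.unit by rewrite -unitmxE repr_mx_unit.
rewrite /P !groupM ?groupV //= !repr_mxM ?groupM ?groupV //.
rewrite !repr_mxV // !det_mulmx !det_inv.
set x := \det _ in ua *; set y := \det _ in ub *.
by rewrite [x * y]mulrC -(mulrA y) divrr // mulr1 divrr.
Qed.

Lemma repr_prod_commg_scalar_expr (K : fieldType) d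
    (rG : mx_representation K G d) z :
  rG (prod_commg a b) = z%:M -> z ^+ d = 1.
Proof. by move=> cz; rewrite -det_scalar -cz det_repr_prod_commg. Qed.

Lemma prim_root_prod_commg_irr (K : fieldType) n
    (rG : mx_representation K G n.+1) z :
  n.+1.-primitive_root z -> rG (prod_commg a b) = z%:M -> mx_irreducible rG.
Proof.
move=> zP cz; apply/mx_irrP; split=> // U Umod nzU.
have zU := repr_prod_commg_scalar_expr (submod_mx_scalar Umod cz).
rewrite /row_full eqn_leq rank_leq_col.
by apply: prim_root_expr_eq1_leq zP _ zU; rewrite lt0n mxrank_eq0.
Qed.

(* A non-scalar A has an eigenvector over the field K[A], whose eigenspace is
   a proper submodule of the extended representation; but the extended
   representation is irreducible by the previous lemma. *)
Lemma prim_root_prod_commg_cent_scalar (K : fieldType) n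
    (rG : mx_representation K G n.+1) z A :
    n.+1.-primitive_root z -> rG (prod_commg a b) = z%:M ->
  centgmx rG A -> is_scalar_mx A.
Proof.
move=> zP cz cGA; have irrG := prim_root_prod_commg_irr zP cz.
rewrite -mxminpoly_linear_is_scalar leqNgt; apply/negP => /non_linear_gen_reducible.
set genf := gen irrG cGA.
have zfP : n.+1.-primitive_root (genf z) by rewrite fmorph_primitive_root.
have czf : map_repr genf rG (prod_commg a b) = (genf z)%:M.
  by rewrite map_reprE cz map_scalar_mx.
by have /mxsimpleP[_ _] := prim_root_prod_commg_irr zfP czf.
Qed.

End CommutatorRepr.

Lemma invmx_conj (R : comUnitRingType) n (P M : 'M[R]_n) : P \in unitmx ->
  invmx (P *m M *m invmx P) = P *m invmx M *m invmx P.
Proof.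
move=> uP; have [uM | nuM] := boolP (M \in unitmx); last first.
  rewrite (invmx_out nuM) invmx_out // inE /= !unitmx_mul.
  by rewrite (negbTE nuM) andbF.
have uX : P *m M *m invmx P \in unitmx by rewrite !unitmx_mul unitmx_inv uP uM.
have inv_l : P *m invmx M *m invmx P *m (P *m M *m invmx P) = 1%:M.
  by rewrite !mulmxA mulmxKV // (mulmxKV uM) mulmxV.
by rewrite -[LHS]mul1mx -inv_l mulmxK.
Qed.

Section SimultaneousConjugation.
Variables (F : finFieldType) (m g : nat).
Notation GLT := {'GL_m.+1[F]}.
Notation T := (tuple_t F m g).

Lemma conj_tuple1 (t : T) : conj_tuple 1%:M t = t.
Proof.
by apply/ffunP => i; rewrite ffunE invmx1 !mul1mx !mulmx1 -surjective_pairing.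
Qed.

Lemma conj_tupleM (P Q : 'M[F]_m.+1) (t : T) : P \in unitmx -> Q \in unitmx ->
  conj_tuple (P *m Q) t = conj_tuple P (conj_tuple Q t).
Proof.
move=> uP uQ; have invPQ : invmx (P *m Q) = invmx Q *m invmx P by exact: invrM.
by apply/ffunP => i; rewrite !ffunE /= invPQ !mulmxA.
Qed.

Lemma prod_comm_conj_tuple (P : 'M[F]_m.+1) (t : T) : P \in unitmx ->
  prod_comm (conj_tuple P t) = P *m prod_comm t *m invmx P.
Proof.
move=> uP; have conjM : {morph (fun M => P *m M *m invmx P) : M N / M *m N}.
  by move=> M N /=; rewrite !mulmxA mulmxKV.
rewrite /prod_comm (big_morph _ conjM (id1 := 1%:M) (id2 := 1%:M));
  last by rewrite mulmx1 mulmxV.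
by apply: eq_bigr => i _; rewrite ffunE /mxcomm !invmx_conj // !conjM.
Qed.

Lemma conj_tuple_twisted z (P : 'M[F]_m.+1) (t : T) : P \in unitmx ->
  (conj_tuple P t \in twisted_tuples m g z) = (t \in twisted_tuples m g z).
Proof.
move=> uP; have detP : \det P \is a GRing.unit by rewrite -unitmxE.
have det_conj M : \det (P *m M *m invmx P) = \det M.
  by rewrite !det_mulmx det_inv mulrAC divrr ?mul1r.
rewrite !inE prod_comm_conj_tuple //; congr (_ && _).
  by apply: eq_forallb => i; rewrite ffunE /= !det_conj.
apply/eqP/eqP => [tz | -> ]; last by rewrite scalar_mxC mulmxK.
rewrite -(mulKmx uP (prod_comm t)) -(mulmxKV uP (P *m prod_comm t)) tz.
by rewrite -scalar_mxC mulKmx.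
Qed.

Definition conj_act (t : T) (P : GLT) : T := conj_tuple (GLval P^-1) t.

Lemma conj_act1 : conj_act^~ 1%g =1 id.
Proof. by move=> t; rewrite /conj_act invg1 conj_tuple1. Qed.

Lemma conj_actM : forall t, act_morph conj_act t.
Proof.
move=> t P Q; rewrite /conj_act invMg GL_MxE.
by rewrite conj_tupleM ?(GL_unitmx P^-1) ?(GL_unitmx Q^-1).
Qed.

Definition conj_action := TotalAction conj_act1 conj_actM.

Lemma conj_orbitE (t : T) : conj_orbit t = orbit conj_action [set: GLT] t.
Proof.
apply/setP => u; apply/imsetP/imsetP => -[P _ ->]; exists P^-1%g => //.
by rewrite /= /conj_act invgK.
Qed.

Lemma conj_act_fixP (t : T) (P : GLT) :
  conj_act t P = t <-> forall i, comm_mx P (t i).1 /\ comm_mx P (t i).2.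
Proof.
have uP := GL_unitmx P.
have fixE M : (invmx P *m M *m invmx (invmx P) = M) <-> comm_mx P M.
  rewrite invmxK /comm_mx; split=> [PM1 | PM]; last by rewrite -mulmxA -PM mulKmx.
  by rewrite -{1}PM1 !mulmxA mulmxV // mul1mx.
rewrite /conj_act GL_VxE; split=> [tP i | tP].
  by move/ffunP/(_ i): tP; rewrite ffunE; case: (t i) => A B [/fixE ? /fixE ?].
apply/ffunP => i; rewrite ffunE; have [/fixE -> /fixE ->] := tP i.
by rewrite -surjective_pairing.
Qed.

Lemma GL_mx_repr (H : {group GLT}) : mx_repr H (fun P : GLT => GLval P).
Proof. by split. Qed.

Definition GL_repr (H : {group GLT}) := MxRepresentation (GL_mx_repr H).

Definition GL_of_mx (M : 'M[F]_m.+1) : GLT := insubd (1%g : GLT) M.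

Lemma GL_of_mxK M : M \in unitmx -> GLval (GL_of_mx M) = M.
Proof. by move=> uM; rewrite insubdK. Qed.

Lemma GLval_prod_commg (a b : 'I_g -> GLT) :
  GLval (prod_commg a b) = \big[mulmx/1%:M]_(i < g) mxcomm (a i) (b i).
Proof.
rewrite /prod_commg (big_morph _ (fun P Q : GLT => GL_MxE P Q) (GL_1E _ _)).
by apply: eq_bigr => i _; rewrite !GL_MxE !GL_VxE.
Qed.

Lemma GL_cent1P (P Q : GLT) : reflect (comm_mx P Q) (Q \in 'C[P]%g).
Proof.
rewrite cent1E -(inj_eq val_inj); change (GLval (Q * P)%g == GLval (P * Q)%g)
  with (Q *m P == P *m Q).
by rewrite eq_sym; apply: eqP.
Qed.

Lemma twisted_cent_is_scalar (z : F) (t : T) (P : GLT) :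
    m.+1.-primitive_root z -> t \in twisted_tuples m g z ->
    (forall i, comm_mx P (t i).1 /\ comm_mx P (t i).2) ->
  is_scalar_mx P.
Proof.
move=> zP; rewrite inE => /andP[/forallP det_t1 /eqP tz] cPt.
have unit_t i : (t i).1 \in unitmx /\ (t i).2 \in unitmx.
  by case/andP: (det_t1 i) => /eqP d1 /eqP d2; rewrite !unitmxE d1 d2 unitr1.
pose a i := GL_of_mx (t i).1; pose b i := GL_of_mx (t i).2.
have ea i : GLval (a i) = (t i).1 by rewrite GL_of_mxK //; case: (unit_t i).
have eb i : GLval (b i) = (t i).2 by rewrite GL_of_mxK //; case: (unit_t i).
have aC i : a i \in 'C[P]%g by apply/GL_cent1P; rewrite ea; case: (cPt i).
have bC i : b i \in 'C[P]%g by apply/GL_cent1P; rewrite eb; case: (cPt i).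
apply: (prim_root_prod_commg_cent_scalar aC bC (rG := GL_repr 'C[P]%G) zP).
  by rewrite /= GLval_prod_commg -tz; apply: eq_bigr => i _; rewrite ea eb.
by apply/centgmxP => Q /GL_cent1P.
Qed.

Lemma astab1_conj_twisted (z : F) (t : T) :
    m.+1.-primitive_root z -> t \in twisted_tuples m g z ->
  'C[t | conj_action]%g = GL_scalars F m.
Proof.
move=> zP tz; apply/setP => P; rewrite [RHS]inE.
apply/astab1P/idP => [/conj_act_fixP | /is_scalar_mxP[c Pc]].
  exact: twisted_cent_is_scalar zP tz.
by apply/conj_act_fixP => i; rewrite /comm_mx Pc !scalar_mxC.
Qed.

Lemma GL_scalars_group_set : group_set (GL_scalars F m).
Proof.
apply/group_setP; split=> [|P Q]; first by rewrite inE; apply/is_scalar_mxP; exists 1.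
rewrite !inE => /is_scalar_mxP[c Pc] /is_scalar_mxP[d Qd].
by apply/is_scalar_mxP; exists (c * d); rewrite GL_MxE Pc Qd -scalar_mxM.
Qed.

Canonical GL_scalars_group := Group GL_scalars_group_set.

Lemma card_PGL : #|PGL F m| = #|[set: GLT] : GL_scalars F m|%g.
Proof.
rewrite /PGL -[GL_scalars F m]/(gval GL_scalars_group) card_quotient //.
apply/cents_norm/centsP => P _ Q /[!inE] /is_scalar_mxP[c Qc].
by apply/cent1P; apply/GL_cent1P; rewrite /comm_mx Qc scalar_mxC.
Qed.

Lemma card_twisted_tuples (z : F) : m.+1.-primitive_root z ->
  #|twisted_tuples m g z| = (#|conj_classes m g z| * #|PGL F m|)%N.
Proof.
move=> zP; have acts : [acts [set: GLT], on twisted_tuples m g z | conj_action].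
  apply/subsetP => P _; rewrite !inE /=; apply/subsetP => t tz.
  by rewrite inE conj_tuple_twisted ?(GL_unitmx P^-1).
rewrite (card_partition (orbit_partition acts)) -sum_nat_const.
rewrite /conj_classes (eq_imset _ (@conj_orbitE)).
apply: eq_bigr => _ /imsetP[t tz ->].
by rewrite card_orbit setTI (astab1_conj_twisted zP tz) card_PGL.
Qed.

End SimultaneousConjugation.

Theorem corollary3p3 (F : finFieldType) (n g : nat) (zeta : F) :
  (0 < n)%N -> (n %| #|F| - 1)%N -> n.-primitive_root zeta -> (1 <= g)%N ->
  (#|conj_classes n.-1 g zeta|%:R : rat)
    = (#|twisted_tuples n.-1 g zeta|%:R) / (#|PGL F n.-1|%:R).
Proof.
move=> n_gt0 _ zetaP _; rewrite -(prednK n_gt0) in zetaP.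
rewrite (card_twisted_tuples g zetaP) natrM mulfK // Num.Theory.pnatr_eq0.
by rewrite -lt0n card_PGL indexg_gt0.
Qed.
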